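(* Let $M$ and $N$ be weight sequences with $m_k^{1/k}\to\infty$, $n_k^{1/k}\to\infty$, and such that there is $C\ge1$ with $M_{k+j}\le C^{k+j}N_jN_k$ for all $j,k\in\mathbb{N}$. Then there is $D\ge1$ such that $h_m(t)\le h_n(Dt)^2$ for all $t>0$.
   Context: A weight sequence is given by an increasing sequence $1=\mu_0\le\mu_1\le\cdots$ via $M_k=\mu_0\cdots\mu_k=k!\,m_k$, with $M_k^{1/k}\to\infty$; analogously $N\leftrightarrow n$. For a positive sequence $m$ with $m_0=1$, $h_m(t)=\inf_{k\in\mathbb{N}}m_kt^k$ for $t>0$. *)

From Stdlib Require Import Reals Lra ClassicalEpsilon Factorial.
Open Scope R_scope.

Definition Mseq (mu : nat -> R) (k : nat) : R := prod_f_R0 mu k.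

Definition mseq (mu : nat -> R) (k : nat) : R := Mseq mu k / INR (fact k).

(* k-th root of a_k (value at k = 0 irrelevant for limits) *)
Definition kroot (a : nat -> R) (k : nat) : R := Rpower (a k) (/ INR k).

Definition weight_seq (mu : nat -> R) : Prop :=
  mu 0%nat = 1 /\ (forall k, mu k <= mu (S k)) /\ cv_infty (kroot (Mseq mu)).

Definition is_glb (S : R -> Prop) (a : R) : Prop :=
  (forall x, S x -> a <= x) /\ (forall b, (forall x, S x -> b <= x) -> b <= a).

Definition h (m : nat -> R) (t : R) : R :=
  epsilon (inhabits 0) (fun a => is_glb (fun x => exists k, x = m k * t ^ k) a).

(* Since k!^2 <= (2k)!, the hypothesis at j = k gives m_(2k) <= C^(2k) n_k^2, hence
   h_m(t) <= m_(2k) t^(2k) <= (n_k (C t)^k)^2 for every k; taking square roots and the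
   infimum over k yields h_m(t) <= h_n(C t)^2, so D = C works. *)
From Stdlib Require Import Reals Lra Lia Psatz ClassicalEpsilon Factorial.
Open Scope R_scope.

Lemma is_glb_range_exists (f : nat -> R) (c : R) :
  (forall k, c <= f k) -> exists a, is_glb (fun x => exists k, x = f k) a.
Proof.
  intros Hc.
  set (E := fun y => exists k, y = - f k).
  assert (HE : bound E) by (exists (- c); intros y [k ->]; specialize (Hc k); lra).
  assert (HE0 : exists y, E y) by (exists (- f 0%nat); exists 0%nat; reflexivity).
  destruct (completeness E HE HE0) as [l [Hub Hleast]].
  exists (- l); split.
  - intros x [k ->].
    assert (l >= - f k) by (apply Rle_ge, Hub; exists k; reflexivity).
    lra.
  - intros b Hb.
    enough (l <= - b) by lra.
    apply Hleast; intros y [k ->].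
    specialize (Hb (f k) (ex_intro _ k eq_refl)); lra.
Qed.

Lemma h_is_glb (m : nat -> R) (t : R) :
  (forall k, 0 <= m k * t ^ k) ->
  is_glb (fun x => exists k, x = m k * t ^ k) (h m t).
Proof.
  intros Hpos.
  apply (epsilon_spec (inhabits 0) (fun a => is_glb _ a)).
  exact (is_glb_range_exists (fun k => m k * t ^ k) 0 Hpos).
Qed.

Lemma is_glb_range_le_sqr (f : nat -> R) (a b : R) :
  is_glb (fun x => exists k, x = f k) a -> (forall k, 0 <= f k) ->
  (forall k, b <= f k ^ 2) -> b <= a ^ 2.
Proof.
  intros [_ Hgreatest] Hf Hb.
  destruct (Rle_lt_dec b 0) as [Hb0 | Hb0]; [nra |].
  assert (Hsqrt : sqrt b <= a).
  { apply Hgreatest; intros x [k ->].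
    rewrite <- (sqrt_pow2 (f k)) by apply Hf.
    apply sqrt_le_1_alt, Hb. }
  rewrite <- (pow2_sqrt b) by lra.
  apply pow_incr; split; [apply sqrt_pos | exact Hsqrt].
Qed.

Lemma weight_seq_ge1 (mu : nat -> R) : weight_seq mu -> forall k, 1 <= mu k.
Proof.
  intros [H0 [Hincr _]] k; induction k; [lra |].
  specialize (Hincr k); lra.
Qed.

Lemma Mseq_ge1 (mu : nat -> R) : weight_seq mu -> forall k, 1 <= Mseq mu k.
Proof.
  intros Hw k; unfold Mseq; induction k; simpl.
  - now apply weight_seq_ge1.
  - pose proof (weight_seq_ge1 mu Hw (S k)); nra.
Qed.

Lemma mseq_pow_ge0 (mu : nat -> R) (t : R) :
  weight_seq mu -> 0 <= t -> forall k, 0 <= mseq mu k * t ^ k.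
Proof.
  intros Hw Ht k.
  apply Rmult_le_pos; [| now apply pow_le].
  unfold mseq, Rdiv; apply Rmult_le_pos.
  - pose proof (Mseq_ge1 mu Hw k); lra.
  - apply Rlt_le, Rinv_0_lt_compat, lt_0_INR, lt_O_fact.
Qed.

Lemma fact_mul_le_fact_add (k j : nat) : (fact k * fact j <= fact (k + j))%nat.
Proof.
  induction j.
  - rewrite Nat.add_0_r; simpl; lia.
  - rewrite Nat.add_succ_r; simpl; nia.
Qed.

Lemma mseq_double_le (mu nu : nat -> R) (C : R) (k : nat) :
  Mseq mu (k + k) <= C ^ (k + k) * Mseq nu k * Mseq nu k ->
  mseq mu (k + k) <= C ^ (k + k) * mseq nu k ^ 2.
Proof.
  intros HM; unfold mseq.
  set (F := INR (fact (k + k))); set (f := INR (fact k)).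
  assert (Hf : 0 < f) by apply lt_0_INR, lt_O_fact.
  assert (Hff : f * f <= F).
  { unfold f, F; rewrite <- mult_INR; apply le_INR, fact_mul_le_fact_add. }
  assert (HN : 0 <= C ^ (k + k) * Mseq nu k * Mseq nu k).
  { rewrite pow_add; pose proof (pow2_ge_0 (C ^ k * Mseq nu k)); nra. }
  apply Rle_trans with (C ^ (k + k) * Mseq nu k * Mseq nu k / F).
  - apply Rmult_le_compat_r; [apply Rlt_le, Rinv_0_lt_compat; nra | exact HM].
  - replace (C ^ (k + k) * (Mseq nu k / f) ^ 2)
      with (C ^ (k + k) * Mseq nu k * Mseq nu k / (f * f)) by (field; lra).
    apply Rmult_le_compat_l; [exact HN |].
    apply Rinv_le_contravar; nra.
Qed.

Theorem lemma3p13 (mu nu : nat -> R)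
  (Hmu : weight_seq mu) (Hnu : weight_seq nu)
  (Hm : cv_infty (kroot (mseq mu))) (Hn : cv_infty (kroot (mseq nu)))
  (C : R) (HC : 1 <= C)
  (HMN : forall j k : nat, Mseq mu (k + j) <= C ^ (k + j) * Mseq nu j * Mseq nu k) :
  exists D : R, 1 <= D /\
    forall t : R, 0 < t -> h (mseq mu) t <= (h (mseq nu) (D * t)) ^ 2.
Proof.
  exists C; split; [lra |]; intros t Ht.
  pose proof (mseq_pow_ge0 nu (C * t) Hnu ltac:(nra)) as Hnu_terms.
  apply (is_glb_range_le_sqr (fun k => mseq nu k * (C * t) ^ k));
    [exact (h_is_glb _ _ Hnu_terms) | exact Hnu_terms |].
  intros k.
  apply Rle_trans with (mseq mu (k + k) * t ^ (k + k)).
  - apply (h_is_glb _ _ (mseq_pow_ge0 mu t Hmu (Rlt_le _ _ Ht))).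
    exists (k + k)%nat; reflexivity.
  - replace ((mseq nu k * (C * t) ^ k) ^ 2)
      with (C ^ (k + k) * mseq nu k ^ 2 * t ^ (k + k))
      by (rewrite !pow_add, (Rpow_mult_distr C t k); ring).
    apply Rmult_le_compat_r; [apply pow_le; lra |].
    apply mseq_double_le, HMN.
Qed.
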